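(* Let $\mathcal{C}_1,\mathcal{C}_2$ be symmetric monoidal anti-involutive categories, each with duals, a monoidal anti-involutive $B\mathbb{Z}/2$-action $(-1)^F$ and a closed monoidal positivity structure $P_i$, such that $(\mathcal{C}_1)_{P_1}$ and $(\mathcal{C}_2)_{P_2}$ are fermionically dagger compact. Let $F\colon(\mathcal{C}_1)_{P_1}\to(\mathcal{C}_2)_{P_2}$ be a symmetric monoidal dagger functor, corresponding to a symmetric monoidal anti-involutive functor $(F,\phi)\colon\mathcal{C}_1\to\mathcal{C}_2$ with $F(P_1)\subseteq P_2$. Then $F(\widetilde{P_1})\subseteq\widetilde{P_2}$.
   Context: Symmetric monoidal anti-involutive category $(\mathcal{C},d,\eta)$: symmetric monoidal category, symmetric monoidal functor $d\colon\mathcal{C}\to\mathcal{C}^{\mathrm{op}}$, monoidal natural isomorphism $\eta\colon\mathrm{id}\Rightarrow d^2$ with $d(\eta_x)\circ\eta_{dx}=\mathrm{id}$. A symmetric monoidal anti-involutive functor $(F,\phi)$: symmetric monoidal functor with monoidal natural isomorphism $\phi\colon F\circ d\Rightarrow d\circ F$ with $\phi_{dx}\circ F(\eta_x)=d(\phi_x)\circ\eta_{F(x)}$. Hermitian pairing: isomorphism $h\colon c\to dc$ with $d(h)\circ\eta_c=h$; $\mathrm{Herm}\,\mathcal{C}$ has objects $(c,h)$, morphisms those of $\mathcal{C}$, dagger $f^\dagger=h_1^{-1}\circ d(f)\circ h_2$, tensor $(c_1\otimes c_2,\chi\circ(h_1\otimes h_2))$. A closed monoidal positivity structure $P$ is a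 collection of Hermitian pairings surjecting onto objects, closed under tensor product and transfer $h\mapsto d(g)\circ h\circ g$ along isomorphisms $g$; $\mathcal{C}_P$ is the full symmetric monoidal dagger subcategory of $\mathrm{Herm}\,\mathcal{C}$ on $P$. $F(P)$ denotes the pairings $\phi_c\circ F(h)$, $h\in P$. A monoidal anti-involutive $B\mathbb{Z}/2$-action is a monoidal natural automorphism $(-1)^F$ of the identity with $(-1)^F\circ(-1)^F=\mathrm{id}$ and $d((-1)^F_c)=(-1)^F_{dc}$. $\widetilde{P}$ is the collection of composites $h\circ(-1)^F_x$ for $(x,h)\in P$. Fix a dual functor $(\cdot)^*$ and let $\kappa_x\colon(dx)^*\to d(x^* )$ be the canonical uniqueness-of-duals isomorphism. $\mathcal{C}_P$ is fermionically dagger compact if for every $(x,h)\in P$ the Hermitian pairing $\kappa_x\circ(h^* )^{-1}\circ(-1)^F_{x^*}\colon x^*\to d(x^* )$ lies in $P$ (equivalently the standard dual functor on $\mathrm{Herm}\,\mathcal{C}$, $(x,h)\mapsto(x^*,\kappa_x\circ(h^* )^{-1})$, restricts to a symmetric monoidal dagger functor $\mathcal{C}_P\to\mathcal{C}_{\widetilde{P}}^{\mathrm{op}}$). *)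

Unset Implicit Arguments.
Unset Strict Implicit.

Record MonData := {
  ob : Type;
  hom : ob -> ob -> Type;
  idm : forall x, hom x x;
  comp : forall x y z, hom y z -> hom x y -> hom x z;  (* comp g f = g o f *)
  tens : ob -> ob -> ob;
  tensh : forall x x' y y', hom x x' -> hom y y' -> hom (tens x y) (tens x' y');
  unit : ob;
  alpha : forall x y z, hom (tens (tens x y) z) (tens x (tens y z));
  alpha_inv : forall x y z, hom (tens x (tens y z)) (tens (tens x y) z);
  lam : forall x, hom (tens unit x) x;
  lam_inv : forall x, hom x (tens unit x);
  rho : forall x, hom (tens x unit) x;
  rho_inv : forall x, hom x (tens x unit);
  braid : forall x y, hom (tens x y) (tens y x)
}.

Arguments hom {m} _ _.
Arguments idm {m} x.
Arguments comp {m x y z} _ _.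
Arguments tens {m} _ _.
Arguments tensh {m x x' y y'} _ _.
Arguments unit {m}.
Arguments alpha {m} x y z.
Arguments alpha_inv {m} x y z.
Arguments lam {m} x.
Arguments lam_inv {m} x.
Arguments rho {m} x.
Arguments rho_inv {m} x.
Arguments braid {m} x y.

Definition is_iso {C : MonData} {x y : ob C} (f : hom x y) : Prop :=
  exists g : hom y x, comp g f = idm x /\ comp f g = idm y.

Definition is_symmon (C : MonData) : Prop :=
  (forall (x y : ob C) (f : hom x y), comp (idm y) f = f) /\
  (forall (x y : ob C) (f : hom x y), comp f (idm x) = f) /\
  (forall (x y z w : ob C) (f : hom x y) (g : hom y z) (h : hom z w),
      comp h (comp g f) = comp (comp h g) f) /\
  (forall x y : ob C, tensh (idm x) (idm y) = idm (tens x y)) /\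
  (forall (x1 x2 x3 y1 y2 y3 : ob C) (f : hom x1 x2) (f' : hom x2 x3)
          (g : hom y1 y2) (g' : hom y2 y3),
      tensh (comp f' f) (comp g' g) = comp (tensh f' g') (tensh f g)) /\
  (forall x y z : ob C, comp (alpha_inv x y z) (alpha x y z) = idm _ /\
                 comp (alpha x y z) (alpha_inv x y z) = idm _) /\
  (forall x : ob C, comp (lam_inv x) (lam x) = idm _ /\ comp (lam x) (lam_inv x) = idm _) /\
  (forall x : ob C, comp (rho_inv x) (rho x) = idm _ /\ comp (rho x) (rho_inv x) = idm _) /\
  (forall (x x' y y' z z' : ob C) (f : hom x x') (g : hom y y') (h : hom z z'),
      comp (alpha x' y' z') (tensh (tensh f g) h)
      = comp (tensh f (tensh g h)) (alpha x y z)) /\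
  (forall (x y : ob C) (f : hom x y), comp (lam y) (tensh (idm unit) f) = comp f (lam x)) /\
  (forall (x y : ob C) (f : hom x y), comp (rho y) (tensh f (idm unit)) = comp f (rho x)) /\
  (forall w x y z : ob C,
      comp (alpha w x (tens y z)) (alpha (tens w x) y z)
      = comp (tensh (idm w) (alpha x y z))
             (comp (alpha w (tens x y) z) (tensh (alpha w x y) (idm z)))) /\
  (forall x y : ob C, comp (tensh (idm x) (lam y)) (alpha x unit y) = tensh (rho x) (idm y)) /\
  (forall (x x' y y' : ob C) (f : hom x x') (g : hom y y'),
      comp (braid x' y') (tensh f g) = comp (tensh g f) (braid x y)) /\
  (forall x y : ob C, comp (braid y x) (braid x y) = idm (tens x y)) /\
  (forall x y z : ob C,
      comp (alpha y z x) (comp (braid x (tens y z)) (alpha x y z))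
      = comp (tensh (idm y) (braid x z))
             (comp (alpha y x z) (tensh (braid x y) (idm z)))).

Definition op (C : MonData) : MonData := {|
  ob := ob C;
  hom := fun x y => @hom C y x;
  idm := fun x => @idm C x;
  comp := fun x y z (g : @hom C z y) (f : @hom C y x) => comp f g;
  tens := @tens C;
  tensh := fun x x' y y' (f : @hom C x' x) (g : @hom C y' y) => tensh f g;
  unit := @unit C;
  alpha := @alpha_inv C;
  alpha_inv := @alpha C;
  lam := @lam_inv C;
  lam_inv := @lam C;
  rho := @rho_inv C;
  rho_inv := @rho C;
  braid := fun x y => @braid C y x
|}.

Record SMFun (C D : MonData) := {
  fob : ob C -> ob D;
  fhom : forall x y, @hom C x y -> @hom D (fob x) (fob y);
  fmu : forall x y, @hom D (tens (fob x) (fob y)) (fob (tens x y));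
  fmu_inv : forall x y, @hom D (fob (tens x y)) (tens (fob x) (fob y));
  feps : @hom D unit (fob unit);
  feps_inv : @hom D (fob unit) unit
}.
Arguments fob {C D} s _.
Arguments fhom {C D} s {x y} _.
Arguments fmu {C D} s x y.
Arguments fmu_inv {C D} s x y.
Arguments feps {C D} s.
Arguments feps_inv {C D} s.

Definition is_smfun {C D : MonData} (F : SMFun C D) : Prop :=
  (forall x, fhom F (idm x) = idm (fob F x)) /\
  (forall x y z (f : @hom C x y) (g : @hom C y z),
      fhom F (comp g f) = comp (fhom F g) (fhom F f)) /\
  (forall x y, comp (fmu_inv F x y) (fmu F x y) = idm _ /\
               comp (fmu F x y) (fmu_inv F x y) = idm _) /\
  (comp (feps_inv F) (feps F) = idm _ /\ comp (feps F) (feps_inv F) = idm _) /\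
  (forall x x' y y' (f : @hom C x x') (g : @hom C y y'),
      comp (fmu F x' y') (tensh (fhom F f) (fhom F g))
      = comp (fhom F (tensh f g)) (fmu F x y)) /\
  (forall x y z,
      comp (fhom F (alpha x y z)) (comp (fmu F (tens x y) z) (tensh (fmu F x y) (idm _)))
      = comp (fmu F x (tens y z))
             (comp (tensh (idm _) (fmu F y z)) (alpha (fob F x) (fob F y) (fob F z)))) /\
  (forall x, comp (fhom F (lam x)) (comp (fmu F unit x) (tensh (feps F) (idm _)))
             = lam (fob F x)) /\
  (forall x, comp (fhom F (rho x)) (comp (fmu F x unit) (tensh (idm _) (feps F)))
             = rho (fob F x)) /\
  (forall x y, comp (fhom F (braid x y)) (fmu F x y)
               = comp (fmu F y x) (braid (fob F x) (fob F y))).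

Definition op_fun {C D : MonData} (F : SMFun C D) : SMFun (op C) (op D) :=
  @Build_SMFun (op C) (op D) (fob F)
    (fun (x y : ob C) (f : @hom C y x) => @fhom C D F y x f)
    (fmu_inv F) (fmu F) (feps_inv F) (feps F).

Definition comp_fun {C D E : MonData} (F : SMFun C D) (G : SMFun D E) : SMFun C E := {|
  fob := fun x => fob G (fob F x);
  fhom := fun x y f => fhom G (fhom F f);
  fmu := fun x y => comp (fhom G (fmu F x y)) (fmu G (fob F x) (fob F y));
  fmu_inv := fun x y => comp (fmu_inv G (fob F x) (fob F y)) (fhom G (fmu_inv F x y));
  feps := comp (fhom G (feps F)) (feps G);
  feps_inv := comp (feps_inv G) (fhom G (feps_inv F))
|}.

Definition id_oo (C : MonData) : SMFun C (op (op C)) :=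
  @Build_SMFun C (op (op C)) (fun x => x)
    (fun (x y : ob C) (f : @hom C x y) => f)
    (fun x y => @idm C (tens x y)) (fun x y => @idm C (tens x y))
    (@idm C unit) (@idm C unit).

Definition is_monnatiso {C D : MonData} (F G : SMFun C D)
    (theta : forall x, @hom D (fob F x) (fob G x)) : Prop :=
  (forall x y (f : @hom C x y), comp (theta y) (fhom F f) = comp (fhom G f) (theta x)) /\
  (forall x y, comp (theta (tens x y)) (fmu F x y)
               = comp (fmu G x y) (tensh (theta x) (theta y))) /\
  (comp (theta unit) (feps F) = feps G) /\
  (forall x, is_iso (theta x)).
Arguments is_monnatiso {C D} F G theta.

Record SMAI := {
  smC : MonData;
  dF : SMFun smC (op smC);
  eta : forall x : ob smC, @hom smC x (fob dF (fob dF x))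
}.
Arguments smC s.
Arguments dF s.
Arguments eta s x.

Definition dob (S : SMAI) (x : ob (smC S)) : ob (smC S) := fob (dF S) x.
Definition dhom (S : SMAI) {x y : ob (smC S)} (f : @hom (smC S) x y)
  : @hom (smC S) (dob S y) (dob S x) := fhom (dF S) f.
Arguments dob S x.
Arguments dhom S {x y} f.

Definition is_SMAI (S : SMAI) : Prop :=
  is_symmon (smC S) /\
  is_smfun (dF S) /\
  is_monnatiso (id_oo (smC S)) (comp_fun (dF S) (op_fun (dF S))) (eta S) /\
  (forall x : ob (smC S),
     @comp (smC S) _ _ _ (dhom S (eta S x)) (eta S (dob S x)) = @idm (smC S) (dob S x)).

Definition chi (S : SMAI) (x y : ob (smC S))
  : @hom (smC S) (@tens (smC S) (dob S x) (dob S y)) (dob S (@tens (smC S) x y))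
  := fmu_inv (dF S) x y.
Arguments chi S x y.

Definition is_SMAI_functor (S1 S2 : SMAI) (F : SMFun (smC S1) (smC S2))
    (phi : forall x, @hom (smC S2) (fob F (dob S1 x)) (dob S2 (fob F x)))
    : Prop :=
  is_smfun F /\
  (* phi : F o d => d o F, a monoidal natural iso of functors C1 -> C2^op
     (stated in C2^op, where its components point from dF(x) to F(dx)) *)
  is_monnatiso (comp_fun F (dF S2)) (comp_fun (dF S1) (op_fun F)) phi /\
  (forall x : ob (smC S1),
     @comp (smC S2) _ _ _ (phi (dob S1 x)) (fhom F (eta S1 x))
     = @comp (smC S2) _ _ _ (dhom S2 (phi x)) (eta S2 (fob F x))).
Arguments is_SMAI_functor {S1 S2} F phi.

Definition Pairings (S : SMAI) : Type :=
  forall x : ob (smC S), @hom (smC S) x (dob S x) -> Prop.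

Definition is_herm (S : SMAI) (x : ob (smC S)) (h : @hom (smC S) x (dob S x)) : Prop :=
  is_iso h /\ @comp (smC S) _ _ _ (dhom S h) (eta S x) = h.
Arguments is_herm {S x} h.

Definition is_closed_pos (S : SMAI) (P : Pairings S) : Prop :=
  (forall x h, P x h -> is_herm h) /\
  (forall x, exists h, P x h) /\
  (forall (x1 x2 : ob (smC S)) h1 h2, P x1 h1 -> P x2 h2 ->
      P (@tens (smC S) x1 x2) (@comp (smC S) _ _ _ (chi S x1 x2) (@tensh (smC S) _ _ _ _ h1 h2))) /\
  (forall (x y : ob (smC S)) (g : @hom (smC S) x y) h, is_iso g -> P y h ->
      P x (@comp (smC S) _ _ _ (dhom S g) (@comp (smC S) _ _ _ h g))).
Arguments is_closed_pos {S} P.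

(* F(P) : the pairings phi_c o F(h), (c,h) in P. *)
Definition image_pairings (S1 S2 : SMAI) (F : SMFun (smC S1) (smC S2))
    (phi : forall x, @hom (smC S2) (fob F (dob S1 x)) (dob S2 (fob F x)))
    (P : Pairings S1) : Pairings S2 :=
  fun y k => exists (x : ob (smC S1)) h, P x h /\
    exists e : fob F x = y,
      match e in _ = y' return @hom (smC S2) y' (dob S2 y') -> Prop with
      | eq_refl => fun k' => k' = @comp (smC S2) _ _ _ (phi x) (fhom F h)
      end k.
Arguments image_pairings {S1 S2} F phi P _ _.

Definition pairings_sub (S : SMAI) (P Q : Pairings S) : Prop :=
  forall x h, P x h -> Q x h.
Arguments pairings_sub {S} P Q.

Definition is_fermion_action (S : SMAI) (fl : forall x : ob (smC S), @hom (smC S) x x)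
    : Prop :=
  (forall (x y : ob (smC S)) (f : @hom (smC S) x y),
      @comp (smC S) _ _ _ f (fl x) = @comp (smC S) _ _ _ (fl y) f) /\
  (forall x y : ob (smC S), fl (@tens (smC S) x y) = @tensh (smC S) _ _ _ _ (fl x) (fl y)) /\
  (fl (@unit (smC S)) = @idm (smC S) (@unit (smC S))) /\
  (forall x, @comp (smC S) _ _ _ (fl x) (fl x) = @idm (smC S) x) /\
  (forall x, dhom S (fl x) = fl (dob S x)).
Arguments is_fermion_action {S} fl.

Definition Ptilde (S : SMAI) (fl : forall x : ob (smC S), @hom (smC S) x x)
    (P : Pairings S) : Pairings S :=
  fun x h => exists h0, P x h0 /\ h = @comp (smC S) _ _ _ h0 (fl x).
Arguments Ptilde {S} fl P _ _.

Record DualData (C : MonData) := {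
  dual : ob C -> ob C;
  ev : forall x, @hom C (tens (dual x) x) unit;
  coev : forall x, @hom C unit (tens x (dual x))
}.
Arguments dual {C} d x.
Arguments ev {C} d x.
Arguments coev {C} d x.

Definition is_duals {C : MonData} (D : DualData C) : Prop :=
  (forall x : ob C, comp (rho x) (comp (tensh (idm x) (ev D x))
               (comp (alpha x (dual D x) x)
                 (comp (tensh (coev D x) (idm x)) (lam_inv x)))) = idm x) /\
  (forall x : ob C, comp (lam (dual D x)) (comp (tensh (ev D x) (idm (dual D x)))
               (comp (alpha_inv (dual D x) x (dual D x))
                 (comp (tensh (idm (dual D x)) (coev D x)) (rho_inv (dual D x)))))
             = idm (dual D x)).

Definition dualh {C : MonData} (D : DualData C) {x y : ob C} (f : @hom C x y)
  : @hom C (dual D y) (dual D x) :=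
  comp (lam (dual D x))
   (comp (tensh (ev D y) (idm (dual D x)))
    (comp (tensh (tensh (idm (dual D y)) f) (idm (dual D x)))
     (comp (alpha_inv (dual D y) x (dual D x))
      (comp (tensh (idm (dual D y)) (coev D x)) (rho_inv (dual D y)))))).
Arguments dualh {C} D {x y} f.

(* d(x^dual) is a dual of dx, with coevaluation
   I -> dI -> d(x^dual (x) x) -> d(x^dual) (x) dx -> dx (x) d(x^dual),
   i.e. braid o chi^-1 o d(ev_x) o chi_0. *)
Definition coev_d (S : SMAI) (D : DualData (smC S)) (x : ob (smC S))
  : @hom (smC S) (@unit (smC S)) (@tens (smC S) (dob S x) (dob S (dual D x))) :=
  @comp (smC S) _ _ _ (@braid (smC S) (dob S (dual D x)) (dob S x))
   (@comp (smC S) _ _ _ (fmu (dF S) (dual D x) x)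
    (@comp (smC S) _ _ _ (dhom S (ev D x)) (feps_inv (dF S)))).
Arguments coev_d {S} D x.

(* kappa_x : (dx)^dual -> d(x^dual), the canonical uniqueness-of-duals
   isomorphism between the chosen dual (dx)^dual of dx and d(x^dual). *)
Definition kappa (S : SMAI) (D : DualData (smC S)) (x : ob (smC S))
  : @hom (smC S) (dual D (dob S x)) (dob S (dual D x)) :=
  let C := smC S in
  let dx := dob S x in
  let dxs := dob S (dual D x) in
  @comp C _ _ _ (@lam C dxs)
   (@comp C _ _ _ (@tensh C _ _ _ _ (ev D dx) (@idm C dxs))
    (@comp C _ _ _ (@alpha_inv C (dual D dx) dx dxs)
     (@comp C _ _ _ (@tensh C _ _ _ _ (@idm C (dual D dx)) (coev_d D x))
        (@rho_inv C (dual D dx))))).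
Arguments kappa {S} D x.

Definition ferm_dagger_compact (S : SMAI) (D : DualData (smC S))
    (fl : forall x : ob (smC S), @hom (smC S) x x) (P : Pairings S) : Prop :=
  forall x h, P x h ->
    forall k : @hom (smC S) (dual D x) (dual D (dob S x)),
      @comp (smC S) _ _ _ k (dualh D h) = @idm (smC S) _ ->
      @comp (smC S) _ _ _ (dualh D h) k = @idm (smC S) _ ->
      P (dual D x) (@comp (smC S) _ _ _ (kappa D x) (@comp (smC S) _ _ _ k (fl (dual D x)))).
Arguments ferm_dagger_compact {S} D fl P.

(* Call a pairing p on z dual to a pairing q on y, for a dual pair (y, z), when
   q ⊗ p carries the form ev ∘ braid on y ⊗ z to the evaluation of the image
   dual pair (dy, dz).  Such a p is unique when q is invertible, and it moves
   along the comparison isomorphisms between duals.  Fermionic dagger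
   compactness says exactly that the dual of a pairing h in P, composed with
   (-1)^F, is again in P; by uniqueness and closure of P under transfer, any
   pairing dual to one in P is in P after composing with (-1)^F.
   Now let h (-1)^F be in P1~ with h in P1, and let p be dual to h, so that
   p (-1)^F is in P1.  Twisting by (-1)^F and swapping the pair, h (-1)^F is
   dual to p (-1)^F.  The anti-involutive functor (F, phi) preserves dual pairs
   and duality of pairings and maps P1 into P2, so phi F(h (-1)^F) is dual to a
   pairing in P2, hence lies in P2~. *)

From Corelib Require Import ssreflect.

Notation "g ⊚ f" := (comp g f) (at level 40, left associativity).
Notation "f ⊗ g" := (tensh f g) (at level 35).

Definition is_monoidal (C : MonData) : Prop :=
  (forall (x y : ob C) (f : hom x y), comp (idm y) f = f) /\
  (forall (x y : ob C) (f : hom x y), comp f (idm x) = f) /\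
  (forall (x y z w : ob C) (f : hom x y) (g : hom y z) (h : hom z w),
      comp h (comp g f) = comp (comp h g) f) /\
  (forall x y : ob C, tensh (idm x) (idm y) = idm (tens x y)) /\
  (forall (x1 x2 x3 y1 y2 y3 : ob C) (f : hom x1 x2) (f' : hom x2 x3)
          (g : hom y1 y2) (g' : hom y2 y3),
      tensh (comp f' f) (comp g' g) = comp (tensh f' g') (tensh f g)) /\
  (forall x y z : ob C, comp (alpha_inv x y z) (alpha x y z) = idm _ /\
                        comp (alpha x y z) (alpha_inv x y z) = idm _) /\
  (forall x : ob C, comp (lam_inv x) (lam x) = idm _ /\ comp (lam x) (lam_inv x) = idm _) /\
  (forall x : ob C, comp (rho_inv x) (rho x) = idm _ /\ comp (rho x) (rho_inv x) = idm _) /\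
  (forall (x x' y y' z z' : ob C) (f : hom x x') (g : hom y y') (h : hom z z'),
      comp (alpha x' y' z') (tensh (tensh f g) h)
      = comp (tensh f (tensh g h)) (alpha x y z)) /\
  (forall (x y : ob C) (f : hom x y), comp (lam y) (tensh (idm unit) f) = comp f (lam x)) /\
  (forall (x y : ob C) (f : hom x y), comp (rho y) (tensh f (idm unit)) = comp f (rho x)) /\
  (forall w x y z : ob C,
      comp (alpha w x (tens y z)) (alpha (tens w x) y z)
      = comp (tensh (idm w) (alpha x y z))
             (comp (alpha w (tens x y) z) (tensh (alpha w x y) (idm z)))) /\
  (forall x y : ob C, comp (tensh (idm x) (lam y)) (alpha x unit y) = tensh (rho x) (idm y)).

Lemma symmon_monoidal (C : MonData) : is_symmon C -> is_monoidal C.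
Proof.
  move=> [h1 [h2 [h3 [h4 [h5 [h6 [h7 [h8 [h9 [h10 [h11 [h12 [h13 _]]]]]]]]]]]]].
  by repeat split; auto; try apply h6; try apply h7; try apply h8.
Qed.

Class Monoidal (C : MonData) : Prop := monoidal_ax : is_monoidal C.

Section Monoidal.
Context {C : MonData} {HC : Monoidal C}.

Lemma comp1m (x y : ob C) (f : hom x y) : idm y ⊚ f = f. Proof. apply HC. Qed.
Lemma compm1 (x y : ob C) (f : hom x y) : f ⊚ idm x = f. Proof. apply HC. Qed.
Lemma compmA (x y z w : ob C) (f : hom x y) (g : hom y z) (h : hom z w) :
  h ⊚ (g ⊚ f) = (h ⊚ g) ⊚ f.
Proof. apply HC. Qed.
Lemma tens11 (x y : ob C) : idm x ⊗ idm y = idm (tens x y). Proof. apply HC. Qed.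
Lemma tens_comp (x1 x2 x3 y1 y2 y3 : ob C) (f : hom x1 x2) (f' : hom x2 x3)
    (g : hom y1 y2) (g' : hom y2 y3) :
  (f' ⊚ f) ⊗ (g' ⊚ g) = (f' ⊗ g') ⊚ (f ⊗ g).
Proof. apply HC. Qed.
Lemma alphaK (x y z : ob C) : alpha_inv x y z ⊚ alpha x y z = idm _. Proof. apply HC. Qed.
Lemma alpha_invK (x y z : ob C) : alpha x y z ⊚ alpha_inv x y z = idm _. Proof. apply HC. Qed.
Lemma lamK (x : ob C) : lam_inv x ⊚ lam x = idm _. Proof. apply HC. Qed.
Lemma lam_invK (x : ob C) : lam x ⊚ lam_inv x = idm _. Proof. apply HC. Qed.
Lemma rhoK (x : ob C) : rho_inv x ⊚ rho x = idm _. Proof. apply HC. Qed.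
Lemma rho_invK (x : ob C) : rho x ⊚ rho_inv x = idm _. Proof. apply HC. Qed.
Lemma alpha_nat (x x' y y' z z' : ob C) (f : hom x x') (g : hom y y') (h : hom z z') :
  alpha x' y' z' ⊚ ((f ⊗ g) ⊗ h) = (f ⊗ (g ⊗ h)) ⊚ alpha x y z.
Proof. apply HC. Qed.
Lemma lam_nat (x y : ob C) (f : hom x y) : lam y ⊚ (idm unit ⊗ f) = f ⊚ lam x.
Proof. apply HC. Qed.
Lemma rho_nat (x y : ob C) (f : hom x y) : rho y ⊚ (f ⊗ idm unit) = f ⊚ rho x.
Proof. apply HC. Qed.
Lemma pentagon (w x y z : ob C) :
  alpha w x (tens y z) ⊚ alpha (tens w x) y z
  = (idm w ⊗ alpha x y z) ⊚ (alpha w (tens x y) z ⊚ (alpha w x y ⊗ idm z)).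
Proof. apply HC. Qed.
Lemma triangle (x y : ob C) : (idm x ⊗ lam y) ⊚ alpha x unit y = rho x ⊗ idm y.
Proof. apply HC. Qed.

(* Composites are kept nested to the right; [rew_comp2] and [rew_comp3] let an
   identity between short composites rewrite the head of a longer one. *)
Lemma rew_comp2 {y z w : ob C} {a : hom z w} {b : hom y z} {c : hom y w}
  (e : a ⊚ b = c) (v : ob C) (r : hom v y) : a ⊚ (b ⊚ r) = c ⊚ r.
Proof. by rewrite compmA e. Qed.

Lemma rew_comp3 {y z w u : ob C} {a : hom w u} {b : hom z w} {c : hom y z} {d : hom y u}
  (e : a ⊚ (b ⊚ c) = d) (v : ob C) (r : hom v y) : a ⊚ (b ⊚ (c ⊚ r)) = d ⊚ r.
Proof. by rewrite !compmA -(compmA _ _ _ _ c b a) e. Qed.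

Lemma tens_idl_comp (w x y z : ob C) (f : hom x y) (g : hom y z) :
  idm w ⊗ (g ⊚ f) = (idm w ⊗ g) ⊚ (idm w ⊗ f).
Proof. by rewrite -tens_comp comp1m. Qed.
Lemma tens_idr_comp (w x y z : ob C) (f : hom x y) (g : hom y z) :
  (g ⊚ f) ⊗ idm w = (g ⊗ idm w) ⊚ (f ⊗ idm w).
Proof. by rewrite -tens_comp comp1m. Qed.
Lemma tensE_rl (x x' y y' : ob C) (f : hom x x') (g : hom y y') :
  f ⊗ g = (f ⊗ idm y') ⊚ (idm x ⊗ g).
Proof. by rewrite -tens_comp comp1m compm1. Qed.
Lemma tensE_lr (x x' y y' : ob C) (f : hom x x') (g : hom y y') :
  f ⊗ g = (idm x' ⊗ g) ⊚ (f ⊗ idm y).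
Proof. by rewrite -tens_comp comp1m compm1. Qed.
Lemma tens_interchange (x x' y y' : ob C) (f : hom x x') (g : hom y y') :
  (f ⊗ idm y') ⊚ (idm x ⊗ g) = (idm x' ⊗ g) ⊚ (f ⊗ idm y).
Proof. by rewrite -tensE_rl -tensE_lr. Qed.

Lemma tens_idl_inv (w x y : ob C) (f : hom x y) (g : hom y x) :
  g ⊚ f = idm x -> (idm w ⊗ g) ⊚ (idm w ⊗ f) = idm _.
Proof. by move=> E; rewrite -tens_idl_comp E tens11. Qed.
Lemma tens_idr_inv (w x y : ob C) (f : hom x y) (g : hom y x) :
  g ⊚ f = idm x -> (g ⊗ idm w) ⊚ (f ⊗ idm w) = idm _.
Proof. by move=> E; rewrite -tens_idr_comp E tens11. Qed.

Lemma split_epi_cancel {x y z : ob C} (b : hom x y) (b' : hom y x) (hb : b ⊚ b' = idm y)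
  (a c : hom y z) : a ⊚ b = c ⊚ b -> a = c.
Proof. by move=> E; rewrite -(compm1 _ _ a) -(compm1 _ _ c) -hb !compmA E. Qed.
Lemma split_mono_cancel {x y z : ob C} (b : hom y z) (b' : hom z y) (hb : b' ⊚ b = idm y)
  (a c : hom x y) : b ⊚ a = b ⊚ c -> a = c.
Proof. by move=> E; rewrite -(comp1m _ _ a) -(comp1m _ _ c) -hb -!compmA E. Qed.

Lemma square_inv {x y x' y' : ob C} (a : hom x y) (a' : hom y x) (b : hom x' y')
    (b' : hom y' x') (f : hom x x') (g : hom y y') :
  a ⊚ a' = idm y -> b' ⊚ b = idm x' -> b ⊚ f = g ⊚ a -> b' ⊚ g = f ⊚ a'.
Proof.
  move=> ha hb E. rewrite -(compm1 _ _ (b' ⊚ g)) -ha !compmA -(compmA _ _ _ _ _ g b').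
  by rewrite -E compmA hb comp1m.
Qed.

Lemma inv_comp_eq {x y z : ob C} (a : hom y z) (a' : hom z y) (b : hom x y) (b' : hom y x)
    (d : hom x z) (d' : hom z x) :
  a' ⊚ a = idm y -> b' ⊚ b = idm x -> d ⊚ d' = idm z -> a ⊚ b = d -> b' ⊚ a' = d'.
Proof.
  move=> ha hb hd E. rewrite -(compm1 _ _ (b' ⊚ a')) -hd -E !compmA -(compmA _ _ _ _ a a' b').
  by rewrite ha compm1 hb comp1m.
Qed.

Lemma alpha_inv_nat (x x' y y' z z' : ob C) (f : hom x x') (g : hom y y') (h : hom z z') :
  alpha_inv x' y' z' ⊚ (f ⊗ (g ⊗ h)) = ((f ⊗ g) ⊗ h) ⊚ alpha_inv x y z.
Proof. apply: square_inv; [apply: alpha_invK | apply: alphaK | apply: alpha_nat]. Qed.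
Lemma lam_inv_nat (x y : ob C) (f : hom x y) : lam_inv y ⊚ f = (idm unit ⊗ f) ⊚ lam_inv x.
Proof. apply: square_inv; [apply: lam_invK | apply: lamK | by rewrite lam_nat]. Qed.
Lemma rho_inv_nat (x y : ob C) (f : hom x y) : rho_inv y ⊚ f = (f ⊗ idm unit) ⊚ rho_inv x.
Proof. apply: square_inv; [apply: rho_invK | apply: rhoK | by rewrite rho_nat]. Qed.

Lemma tens_idl_unit_inj (x y : ob C) (f g : hom x y) : idm unit ⊗ f = idm unit ⊗ g -> f = g.
Proof.
  by move=> E; rewrite -(compm1 _ _ f) -(compm1 _ _ g) -(lam_invK x) !compmA -!lam_nat E.
Qed.
Lemma tens_idr_unit_inj (x y : ob C) (f g : hom x y) : f ⊗ idm unit = g ⊗ idm unit -> f = g.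
Proof.
  by move=> E; rewrite -(compm1 _ _ f) -(compm1 _ _ g) -(rho_invK x) !compmA -!rho_nat E.
Qed.

Lemma lam_tens (x y : ob C) : lam (tens x y) ⊚ alpha unit x y = lam x ⊗ idm y.
Proof.
  apply: tens_idl_unit_inj.
  apply: (split_epi_cancel _ _ (alpha_invK unit (tens unit x) y)).
  apply: (split_epi_cancel _ _ (tens_idr_inv y _ _ _ _ (alpha_invK unit unit x))).
  rewrite -!compmA tens_idl_comp -compmA -pentagon compmA triangle -(tens11 x y).
  rewrite -(alpha_nat _ _ _ _ _ _ (rho unit) (idm x) (idm y)) -(triangle unit x).
  by rewrite tens_idr_comp compmA (alpha_nat _ _ _ _ _ _ (idm unit) (lam x) (idm y)) -compmA.
Qed.

Lemma rho_tens (x y : ob C) : (idm x ⊗ rho y) ⊚ alpha x y unit = rho (tens x y).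
Proof.
  apply: tens_idr_unit_inj.
  apply: (split_mono_cancel _ _ (alphaK x y unit)).
  rewrite -(triangle (tens x y) unit) -(tens11 x y) compmA.
  rewrite (alpha_nat _ _ _ _ _ _ (idm x) (idm y) (lam unit)) -compmA pentagon compmA.
  rewrite -tens_idl_comp triangle compmA -(alpha_nat _ _ _ _ _ _ (idm x) (rho y) (idm unit)).
  by rewrite -compmA -tens_idr_comp.
Qed.

Lemma lam_unit : lam (@unit C) = rho unit.
Proof.
  apply: tens_idr_unit_inj.
  have E : idm unit ⊗ lam (@unit C) = lam (tens unit unit).
  { apply: (split_mono_cancel _ _ (lamK (@unit C))). by rewrite lam_nat. }
  by rewrite -lam_tens -triangle E.
Qed.

Lemma triangle_inv (x y : ob C) :
  alpha_inv x unit y ⊚ (idm x ⊗ lam_inv y) = rho_inv x ⊗ idm y.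
Proof.
  apply: (inv_comp_eq (idm x ⊗ lam y) _ (alpha x unit y)).
  - by apply: tens_idl_inv; apply: lamK.
  - by apply: alphaK.
  - by apply: tens_idr_inv; apply: rho_invK.
  - by apply: triangle.
Qed.

Lemma pentagon_inv (w x y z : ob C) :
  alpha_inv (tens w x) y z ⊚ alpha_inv w x (tens y z)
  = (alpha_inv w x y ⊗ idm z) ⊚ (alpha_inv w (tens x y) z ⊚ (idm w ⊗ alpha_inv x y z)).
Proof.
  apply: (inv_comp_eq (alpha w x (tens y z)) _ (alpha (tens w x) y z) _ _ _ _ _ _
            (pentagon w x y z)).
  - by apply: alphaK.
  - by apply: alphaK.
  - rewrite -!compmA (rew_comp2 (tens_idr_inv z _ _ _ _ (alpha_invK w x y))) comp1m.
    rewrite (rew_comp2 (alpha_invK _ _ _)) comp1m.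
    by apply: tens_idl_inv; apply: alpha_invK.
Qed.

End Monoidal.

Lemma op_monoidal (C : MonData) : Monoidal C -> Monoidal (op C).
Proof.
  move=> HC; rewrite /Monoidal /is_monoidal /=.
  repeat split.
  - by move=> x y f; rewrite compm1.
  - by move=> x y f; rewrite comp1m.
  - by move=> x y z w f g h; rewrite compmA.
  - by move=> x y; rewrite tens11.
  - by move=> *; rewrite tens_comp.
  - by move=> *; rewrite alphaK.
  - by move=> *; rewrite alpha_invK.
  - by move=> *; rewrite lamK.
  - by move=> *; rewrite lam_invK.
  - by move=> *; rewrite rhoK.
  - by move=> *; rewrite rho_invK.
  - by move=> *; rewrite alpha_inv_nat.
  - by move=> *; rewrite lam_inv_nat.
  - by move=> *; rewrite rho_inv_nat.
  - by move=> *; rewrite pentagon_inv compmA.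
  - by move=> *; rewrite triangle_inv.
Qed.

Definition is_dual_pair {C : MonData} (y z : ob C) (e : hom (tens z y) unit)
    (c : hom unit (tens y z)) : Prop :=
  rho y ⊚ ((idm y ⊗ e) ⊚ (alpha y z y ⊚ ((c ⊗ idm y) ⊚ lam_inv y))) = idm y /\
  lam z ⊚ ((e ⊗ idm z) ⊚ (alpha_inv z y z ⊚ ((idm z ⊗ c) ⊚ rho_inv z))) = idm z.

Definition dual_comparison {C : MonData} {y z1 z2 : ob C} (e1 : hom (tens z1 y) unit)
    (c2 : hom unit (tens y z2)) : hom z1 z2 :=
  lam z2 ⊚ ((e1 ⊗ idm z2) ⊚ (alpha_inv z1 y z2 ⊚ ((idm z1 ⊗ c2) ⊚ rho_inv z1))).

Section Duals.
Context {C : MonData} {HC : Monoidal C}.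

Lemma lam_inv_tens (x y : ob C) : alpha_inv unit x y ⊚ lam_inv (tens x y) = lam_inv x ⊗ idm y.
Proof.
  apply: (inv_comp_eq (lam (tens x y)) _ (alpha unit x y) _ _ _ _ _ _ (lam_tens x y)).
  - by apply: lamK.
  - by apply: alphaK.
  - by apply: tens_idr_inv; apply: lam_invK.
Qed.

Lemma rho_inv_tens (x y : ob C) : idm x ⊗ rho_inv y = alpha x y unit ⊚ rho_inv (tens x y).
Proof.
  have E : alpha_inv x y unit ⊚ (idm x ⊗ rho_inv y) = rho_inv (tens x y).
  { apply: (inv_comp_eq (idm x ⊗ rho y) _ (alpha x y unit) _ _ _ _ _ _ (rho_tens x y)).
    - by apply: tens_idl_inv; apply: rhoK.
    - by apply: alphaK.
    - by apply: rho_invK. }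
  by rewrite -E compmA alpha_invK comp1m.
Qed.

Lemma tens_id_rho (x y : ob C) : idm x ⊗ rho y = rho (tens x y) ⊚ alpha_inv x y unit.
Proof. by rewrite -rho_tens -compmA alpha_invK compm1. Qed.

Lemma lam_inv_unit : lam_inv (@unit C) = rho_inv unit.
Proof.
  by rewrite -(compm1 _ _ (lam_inv unit)) -(rho_invK unit) compmA -lam_unit lamK comp1m.
Qed.

Lemma pentagon_inv_l (w x y z : ob C) :
  alpha_inv w x (tens y z) ⊚ (idm w ⊗ alpha x y z)
  = alpha (tens w x) y z ⊚ ((alpha_inv w x y ⊗ idm z) ⊚ alpha_inv w (tens x y) z).
Proof.
  apply: (split_epi_cancel _ _ (alpha_invK w (tens x y) z)).
  apply: (split_epi_cancel _ _ (tens_idr_inv z _ _ _ _ (alpha_invK w x y))).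
  rewrite -!compmA (rew_comp2 (alphaK _ _ _)) comp1m.
  rewrite (tens_idr_inv z _ _ _ _ (alphaK w x y)) compm1 -pentagon.
  by rewrite (rew_comp2 (alphaK _ _ _)) comp1m.
Qed.

Lemma pentagon_inv_r (w x y z : ob C) :
  (idm w ⊗ alpha_inv x y z) ⊚ alpha w x (tens y z)
  = alpha w (tens x y) z ⊚ ((alpha w x y ⊗ idm z) ⊚ alpha_inv (tens w x) y z).
Proof.
  rewrite -(compm1 _ _ (_ ⊚ alpha w x (tens y z))) -(alpha_invK (tens w x) y z) !compmA.
  by rewrite -(compmA _ _ _ _ (alpha (tens w x) y z)) pentagon !compmA -tens_idl_comp
             alphaK tens11 comp1m.
Qed.

Lemma dual_pair_tens_idl_inj {y z : ob C} {e c} : is_dual_pair y z e c ->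
  forall (a : ob C) (f f' : hom a y), e ⊚ (idm z ⊗ f) = e ⊚ (idm z ⊗ f') -> f = f'.
Proof.
  move=> [Hy _] a.
  have key (f : hom a y) :
    f = rho y ⊚ ((idm y ⊗ (e ⊚ (idm z ⊗ f))) ⊚ (alpha y z a ⊚ ((c ⊗ idm a) ⊚ lam_inv a))).
  { rewrite -{1}(comp1m _ _ f) -{1}Hy -!compmA lam_inv_nat.
    rewrite (rew_comp2 (tens_interchange _ _ _ _ _ _)) -(tens11 y z) -!compmA.
    by rewrite (rew_comp2 (alpha_nat _ _ _ _ _ _ _ _ _)) tens_idl_comp -!compmA. }
  by move=> f f' E; rewrite (key f) (key f') E.
Qed.

Lemma dual_pair_tens_idr_inj {y z : ob C} {e c} : is_dual_pair y z e c ->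
  forall (a : ob C) (f f' : hom a z), e ⊚ (f ⊗ idm y) = e ⊚ (f' ⊗ idm y) -> f = f'.
Proof.
  move=> [_ Hz] a.
  have key (f : hom a z) :
    f = lam z ⊚ (((e ⊚ (f ⊗ idm y)) ⊗ idm z) ⊚ (alpha_inv a y z ⊚ ((idm a ⊗ c) ⊚ rho_inv a))).
  { rewrite -{1}(comp1m _ _ f) -{1}Hz -!compmA rho_inv_nat.
    rewrite (rew_comp2 (eq_sym (tens_interchange _ _ _ _ _ _))) -(tens11 y z) -!compmA.
    by rewrite (rew_comp2 (alpha_inv_nat _ _ _ _ _ _ _ _ _)) tens_idr_comp -!compmA. }
  by move=> f f' E; rewrite (key f) (key f') E.
Qed.

Lemma ev_dual_comparison {y z1 z2 : ob C} (e1 : hom (tens z1 y) unit) {e2 c2} :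
  is_dual_pair y z2 e2 c2 -> e2 ⊚ (dual_comparison e1 c2 ⊗ idm y) = e1.
Proof.
  move=> [Hy _].
  transitivity (e1 ⊚ (idm z1 ⊗ (rho y ⊚ ((idm y ⊗ e2)
                  ⊚ (alpha y z2 y ⊚ ((c2 ⊗ idm y) ⊚ lam_inv y)))))); last first.
  { by rewrite Hy tens11 compm1. }
  symmetry; rewrite !tens_idl_comp tens_id_rho -!compmA compmA -rho_nat -lam_unit -!compmA.
  rewrite (rew_comp2 (alpha_inv_nat _ _ _ _ _ _ _ _ _)) -?compmA (tens11 z1 y).
  rewrite (rew_comp2 (tens_interchange _ _ _ _ _ _)) -?compmA.
  rewrite (rew_comp2 (lam_nat _ _ _)) -?compmA (rew_comp2 (pentagon_inv_l _ _ _ _)) -?compmA.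
  rewrite -(tens11 z2 y) (rew_comp2 (eq_sym (alpha_nat _ _ _ _ _ _ _ _ _))) -?compmA.
  rewrite (rew_comp2 (lam_tens _ _)) -?compmA.
  rewrite (rew_comp2 (alpha_inv_nat _ _ _ _ _ _ _ _ _)) -?compmA triangle_inv.
  by rewrite /dual_comparison !tens_idr_comp.
Qed.

Lemma dual_comparison_coev {y z z' : ob C} {e c} (c' : hom unit (tens y z')) :
  is_dual_pair y z e c -> (idm y ⊗ dual_comparison e c') ⊚ c = c'.
Proof.
  move=> [Hy _].
  transitivity ((rho y ⊚ ((idm y ⊗ e) ⊚ (alpha y z y ⊚ ((c ⊗ idm y) ⊚ lam_inv y))))
                  ⊗ idm z' ⊚ c'); last first.
  { by rewrite Hy tens11 comp1m. }
  rewrite /dual_comparison !tens_idl_comp -!compmA rho_inv_tens -?compmA rho_inv_nat.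
  rewrite -lam_inv_unit (rew_comp2 (eq_sym (alpha_nat _ _ _ _ _ _ _ _ _))) -?compmA.
  rewrite (tens11 y z) (rew_comp2 (eq_sym (tens_interchange _ _ _ _ _ _))) -?compmA.
  rewrite -lam_inv_nat (rew_comp2 (pentagon_inv_r _ _ _ _)) -?compmA.
  rewrite (rew_comp2 (eq_sym (alpha_nat _ _ _ _ _ _ _ _ _))) -?compmA.
  rewrite (rew_comp2 (triangle _ _)) -?compmA -(tens11 y z').
  rewrite (rew_comp2 (alpha_inv_nat _ _ _ _ _ _ _ _ _)) -?compmA.
  by rewrite (rew_comp2 (lam_inv_tens _ _)) !tens_idr_comp -!compmA.
Qed.

Lemma dual_comparisonK {y z1 z2 : ob C} {e1 c1 e2 c2} :
  is_dual_pair y z1 e1 c1 -> is_dual_pair y z2 e2 c2 ->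
  dual_comparison e2 c1 ⊚ dual_comparison e1 c2 = idm z1.
Proof.
  move=> H1 H2; apply: (dual_pair_tens_idr_inj H1).
  by rewrite tens_idr_comp compmA !ev_dual_comparison // tens11 compm1.
Qed.

End Duals.

Lemma dual_pair_op {C : MonData} {HC : Monoidal C} (y z : ob C) e c :
  @is_dual_pair (op C) y z e c -> @is_dual_pair C z y c e.
Proof. by move=> [h1 h2]; split; [move: h2 | move: h1]; rewrite /= -!compmA. Qed.

Section DualData.
Context {C : MonData} {HC : Monoidal C} (D : DualData C) (HD : is_duals D).

Lemma dual_data_pair (x : ob C) : is_dual_pair x (dual D x) (ev D x) (coev D x).
Proof. split; [exact: (proj1 HD x) | exact: (proj2 HD x)]. Qed.

Lemma dualhE {x y : ob C} (f : hom x y) :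
  dualh D f = dual_comparison (ev D y ⊚ (idm _ ⊗ f)) (coev D x).
Proof. by rewrite /dualh /dual_comparison tens_idr_comp -compmA. Qed.

Lemma ev_dualh {x y : ob C} (f : hom x y) :
  ev D x ⊚ (dualh D f ⊗ idm x) = ev D y ⊚ (idm _ ⊗ f).
Proof. rewrite dualhE; exact: (ev_dual_comparison _ (dual_data_pair x)). Qed.

Lemma dualh_inv {x y : ob C} (f : hom x y) (g : hom y x) :
  f ⊚ g = idm y -> dualh D g ⊚ dualh D f = idm _.
Proof.
  move=> E; apply: (dual_pair_tens_idr_inj (dual_data_pair y)).
  by rewrite tens_idr_comp compmA ev_dualh -compmA -tens_interchange compmA ev_dualh
             -compmA -tens_idl_comp E.
Qed.

End DualData.

Class Symmetric (C : MonData) : Prop := symmetric_ax : is_symmon C.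
#[export] Instance symmetric_monoidal (C : MonData) {HS : Symmetric C} : Monoidal C :=
  symmon_monoidal C HS.

Section Symmetric.
Context {C : MonData} {HS : Symmetric C}.

Lemma braid_nat (x x' y y' : ob C) (f : hom x x') (g : hom y y') :
  braid x' y' ⊚ (f ⊗ g) = (g ⊗ f) ⊚ braid x y.
Proof. apply HS. Qed.
Lemma braidK (x y : ob C) : braid y x ⊚ braid x y = idm (tens x y).
Proof. apply HS. Qed.
Lemma hexagon (x y z : ob C) :
  alpha y z x ⊚ (braid x (tens y z) ⊚ alpha x y z)
  = (idm y ⊗ braid x z) ⊚ (alpha y x z ⊚ (braid x y ⊗ idm z)).
Proof. apply HS. Qed.

Lemma lam_braid (x : ob C) : lam x ⊚ braid x unit = rho x.
Proof.
  apply: tens_idr_unit_inj.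
  apply: (split_mono_cancel _ _ (braidK x unit)).
  have L : lam (tens unit x)
             ⊚ (alpha unit unit x ⊚ (braid x (tens unit unit) ⊚ alpha x unit unit))
           = braid x unit ⊚ (rho x ⊗ idm unit).
  { rewrite compmA lam_tens (rew_comp2 (eq_sym (braid_nat _ _ _ _ _ _))) -?compmA.
    by rewrite triangle. }
  by rewrite hexagon compmA lam_nat -compmA (rew_comp2 (lam_tens _ _)) -tens_idr_comp in L.
Qed.

Lemma rho_braid (x : ob C) : rho x ⊚ braid unit x = lam x.
Proof. by rewrite -lam_braid -compmA braidK compm1. Qed.

Lemma rho_inv_braid (x : ob C) : rho_inv x = braid unit x ⊚ lam_inv x.
Proof.
  apply: (split_mono_cancel _ _ (rhoK x)).
  by rewrite rho_invK compmA rho_braid lam_invK.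
Qed.

Lemma lam_inv_braid (x : ob C) : lam_inv x = braid x unit ⊚ rho_inv x.
Proof.
  apply: (split_mono_cancel _ _ (lamK x)).
  by rewrite lam_invK compmA lam_braid rho_invK.
Qed.

Lemma hexagon_inv (x y z : ob C) :
  alpha_inv z x y ⊚ (braid (tens x y) z ⊚ alpha_inv x y z)
  = (braid x z ⊗ idm y) ⊚ (alpha_inv x z y ⊚ (idm x ⊗ braid y z)).
Proof.
  have hB : (alpha_inv z x y ⊚ braid (tens x y) z) ⊚ (braid z (tens x y) ⊚ alpha z x y)
            = idm _.
  { by rewrite -!compmA (rew_comp2 (braidK _ _)) comp1m alphaK. }
  have hD : ((idm x ⊗ braid z y) ⊚ (alpha x z y ⊚ (braid z x ⊗ idm y))) ⊚
            ((braid x z ⊗ idm y) ⊚ (alpha_inv x z y ⊚ (idm x ⊗ braid y z))) = idm _.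
  { rewrite -!compmA (rew_comp2 (tens_idr_inv _ _ _ _ _ (braidK _ _))) comp1m.
    rewrite (rew_comp2 (alpha_invK _ _ _)) comp1m.
    by apply: tens_idl_inv; apply: braidK. }
  have E := inv_comp_eq _ _ _ _ _ _ (alphaK x y z) hB hD (hexagon z x y).
  rewrite -compmA in E; exact: E.
Qed.

Lemma alpha_inv_braid_conj (x y : ob C) :
  (braid y x ⊗ idm x) ⊚ (braid x (tens y x) ⊚ (alpha x y x
    ⊚ (braid x (tens x y) ⊚ (idm x ⊗ braid y x))))
  = alpha_inv x y x.
Proof.
  have E1 : braid x (tens y x) ⊚ alpha x y x
            = alpha_inv y x x
              ⊚ ((idm y ⊗ braid x x) ⊚ (alpha y x x ⊚ (braid x y ⊗ idm x))).
  { by rewrite -hexagon compmA alphaK comp1m. }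
  rewrite (rew_comp2 E1) -?compmA (rew_comp3 (eq_sym (hexagon_inv y x x))) -?compmA.
  rewrite (rew_comp2 (alphaK _ _ _)) comp1m.
  rewrite (rew_comp2 (eq_sym (braid_nat _ _ _ _ _ _))) -?compmA (rew_comp2 (braidK _ _)).
  by rewrite comp1m (tens_idl_inv _ _ _ _ _ (braidK _ _)) compm1.
Qed.

Lemma alpha_braid_conj (x y : ob C) :
  (idm x ⊗ braid x y) ⊚ (braid (tens x y) x ⊚ (alpha_inv x y x
    ⊚ (braid (tens y x) x ⊚ (braid x y ⊗ idm x))))
  = alpha x y x.
Proof.
  set X := (_ ⊚ (_ ⊚ (_ ⊚ (_ ⊚ _)))).
  have XX : (braid y x ⊗ idm x) ⊚ (braid x (tens y x) ⊚ (alpha x y x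
              ⊚ (braid x (tens x y) ⊚ (idm x ⊗ braid y x)))) ⊚ X = idm _.
  { rewrite /X -!compmA (rew_comp2 (tens_idl_inv _ _ _ _ _ (braidK _ _))) comp1m.
    rewrite (rew_comp2 (braidK _ _)) comp1m (rew_comp2 (alpha_invK _ _ _)) comp1m.
    rewrite (rew_comp2 (braidK _ _)) comp1m.
    by apply: tens_idr_inv; apply: braidK. }
  rewrite alpha_inv_braid_conj in XX.
  by rewrite -(comp1m _ _ X) -(alpha_invK x y x) -compmA XX compm1.
Qed.

Lemma alpha_inv_braid_conjR (x y v : ob C) (r : hom v _) :
  (braid y x ⊗ idm x) ⊚ (braid x (tens y x) ⊚ (alpha x y x
    ⊚ (braid x (tens x y) ⊚ ((idm x ⊗ braid y x) ⊚ r))))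
  = alpha_inv x y x ⊚ r.
Proof. by rewrite -alpha_inv_braid_conj -!compmA. Qed.

Lemma alpha_braid_conjR (x y v : ob C) (r : hom v _) :
  (idm x ⊗ braid x y) ⊚ (braid (tens x y) x ⊚ (alpha_inv x y x
    ⊚ (braid (tens y x) x ⊚ ((braid x y ⊗ idm x) ⊚ r))))
  = alpha x y x ⊚ r.
Proof. by rewrite -alpha_braid_conj -!compmA. Qed.

Lemma dual_pair_braid {y z : ob C} {e c} :
  is_dual_pair y z e c -> is_dual_pair z y (e ⊚ braid y z) (braid y z ⊚ c).
Proof.
  move=> [Hy Hz]; split.
  - rewrite lam_inv_braid -lam_braid -compmA (rew_comp2 (braid_nat _ _ _ _ _ _)) -?compmA.
    rewrite (rew_comp2 (eq_sym (braid_nat _ _ _ _ (idm z) (braid y z ⊚ c)))) -?compmA.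
    by rewrite tens_idr_comp tens_idl_comp -?compmA alpha_inv_braid_conjR.
  - rewrite rho_inv_braid -rho_braid -compmA (rew_comp2 (braid_nat _ _ _ _ _ _)) -?compmA.
    rewrite (rew_comp2 (eq_sym (braid_nat _ _ _ _ (braid y z ⊚ c) (idm y)))) -?compmA.
    by rewrite tens_idr_comp tens_idl_comp -?compmA alpha_braid_conjR.
Qed.

End Symmetric.

Section Fun.
Context {C D : MonData} {HC : Monoidal C} {HD : Monoidal D} (F : SMFun C D) (HF : is_smfun F).

Lemma fhom_id (x : ob C) : fhom F (idm x) = idm (fob F x). Proof. apply HF. Qed.
Lemma fhom_comp (x y z : ob C) (f : hom x y) (g : hom y z) :
  fhom F (g ⊚ f) = fhom F g ⊚ fhom F f.
Proof. apply HF. Qed.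
Lemma fmuK (x y : ob C) : fmu_inv F x y ⊚ fmu F x y = idm _. Proof. apply HF. Qed.
Lemma fmu_invK (x y : ob C) : fmu F x y ⊚ fmu_inv F x y = idm _. Proof. apply HF. Qed.
Lemma feps_invK : feps F ⊚ feps_inv F = idm _. Proof. apply HF. Qed.
Lemma fmu_nat (x x' y y' : ob C) (f : hom x x') (g : hom y y') :
  fmu F x' y' ⊚ (fhom F f ⊗ fhom F g) = fhom F (f ⊗ g) ⊚ fmu F x y.
Proof. apply HF. Qed.
Lemma fhom_alpha (x y z : ob C) :
  fhom F (alpha x y z) ⊚ (fmu F (tens x y) z ⊚ (fmu F x y ⊗ idm _))
  = fmu F x (tens y z) ⊚ ((idm _ ⊗ fmu F y z) ⊚ alpha (fob F x) (fob F y) (fob F z)).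
Proof. apply HF. Qed.
Lemma fhom_lam (x : ob C) :
  fhom F (lam x) ⊚ (fmu F unit x ⊚ (feps F ⊗ idm _)) = lam (fob F x).
Proof. apply HF. Qed.
Lemma fhom_rho (x : ob C) :
  fhom F (rho x) ⊚ (fmu F x unit ⊚ (idm _ ⊗ feps F)) = rho (fob F x).
Proof. apply HF. Qed.
Lemma fhom_braid (x y : ob C) :
  fhom F (braid x y) ⊚ fmu F x y = fmu F y x ⊚ braid (fob F x) (fob F y).
Proof. apply HF. Qed.

Lemma rew_fhom_comp {x y z : ob C} (f : hom x y) (g : hom y z) v (r : hom v _) :
  fhom F g ⊚ (fhom F f ⊚ r) = fhom F (g ⊚ f) ⊚ r.
Proof. by rewrite fhom_comp compmA. Qed.

Lemma fhom_inv {x y : ob C} (f : hom x y) (g : hom y x) :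
  g ⊚ f = idm x -> fhom F g ⊚ fhom F f = idm _.
Proof. by move=> E; rewrite -fhom_comp E fhom_id. Qed.

Lemma fmu_inv_nat (x x' y y' : ob C) (f : hom x x') (g : hom y y') :
  fmu_inv F x' y' ⊚ fhom F (f ⊗ g) = (fhom F f ⊗ fhom F g) ⊚ fmu_inv F x y.
Proof. apply: square_inv; [apply: fmu_invK | apply: fmuK | by rewrite fmu_nat]. Qed.

Lemma fmu_nat_idl (x y y' : ob C) (g : hom y y') :
  fmu F x y' ⊚ (idm (fob F x) ⊗ fhom F g) = fhom F (idm x ⊗ g) ⊚ fmu F x y.
Proof. by rewrite -fhom_id fmu_nat. Qed.
Lemma fmu_nat_idr (x x' y : ob C) (f : hom x x') :
  fmu F x' y ⊚ (fhom F f ⊗ idm (fob F y)) = fhom F (f ⊗ idm y) ⊚ fmu F x y.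
Proof. by rewrite -fhom_id fmu_nat. Qed.
Lemma fmu_inv_nat_idl (x y y' : ob C) (g : hom y y') :
  (idm (fob F x) ⊗ fhom F g) ⊚ fmu_inv F x y = fmu_inv F x y' ⊚ fhom F (idm x ⊗ g).
Proof. by rewrite -fhom_id fmu_inv_nat. Qed.
Lemma fmu_inv_nat_idr (x x' y : ob C) (f : hom x x') :
  (fhom F f ⊗ idm (fob F y)) ⊚ fmu_inv F x y = fmu_inv F x' y ⊚ fhom F (f ⊗ idm y).
Proof. by rewrite -fhom_id fmu_inv_nat. Qed.

Lemma fhom_alphaE (x y z : ob C) :
  fhom F (alpha x y z)
  = fmu F x (tens y z) ⊚ ((idm _ ⊗ fmu F y z) ⊚ (alpha (fob F x) (fob F y) (fob F z)
      ⊚ ((fmu_inv F x y ⊗ idm _) ⊚ fmu_inv F (tens x y) z))).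
Proof.
  symmetry; rewrite (rew_comp3 (eq_sym (fhom_alpha x y z))) -!compmA.
  by rewrite (rew_comp2 (tens_idr_inv _ _ _ _ _ (fmu_invK _ _))) comp1m fmu_invK compm1.
Qed.

Lemma fhom_alpha_invE (x y z : ob C) :
  fhom F (alpha_inv x y z)
  = fmu F (tens x y) z ⊚ ((fmu F x y ⊗ idm _) ⊚ (alpha_inv (fob F x) (fob F y) (fob F z)
      ⊚ ((idm _ ⊗ fmu_inv F y z) ⊚ fmu_inv F x (tens y z)))).
Proof.
  apply: (split_mono_cancel _ _ (fhom_inv _ _ (alphaK x y z))).
  rewrite -fhom_comp alpha_invK fhom_id fhom_alphaE -!compmA (rew_comp2 (fmuK _ _)) comp1m.
  rewrite (rew_comp2 (tens_idr_inv _ _ _ _ _ (fmuK _ _))) comp1m.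
  rewrite (rew_comp2 (alpha_invK _ _ _)) comp1m.
  by rewrite (rew_comp2 (tens_idl_inv _ _ _ _ _ (fmu_invK _ _))) comp1m fmu_invK.
Qed.

Lemma fhom_alphaER (x y z : ob C) v (r : hom v _) :
  fmu F x (tens y z) ⊚ ((idm _ ⊗ fmu F y z) ⊚ (alpha (fob F x) (fob F y) (fob F z)
    ⊚ ((fmu_inv F x y ⊗ idm _) ⊚ (fmu_inv F (tens x y) z ⊚ r))))
  = fhom F (alpha x y z) ⊚ r.
Proof. by rewrite fhom_alphaE -!compmA. Qed.

Lemma fhom_alpha_invER (x y z : ob C) v (r : hom v _) :
  fmu F (tens x y) z ⊚ ((fmu F x y ⊗ idm _) ⊚ (alpha_inv (fob F x) (fob F y) (fob F z)
    ⊚ ((idm _ ⊗ fmu_inv F y z) ⊚ (fmu_inv F x (tens y z) ⊚ r))))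
  = fhom F (alpha_inv x y z) ⊚ r.
Proof. by rewrite fhom_alpha_invE -!compmA. Qed.

Lemma lam_inv_fobE (x : ob C) :
  lam_inv (fob F x) = (feps_inv F ⊗ idm _) ⊚ (fmu_inv F unit x ⊚ fhom F (lam_inv x)).
Proof.
  apply: (split_mono_cancel _ _ (lamK (fob F x))).
  rewrite lam_invK -fhom_lam -!compmA (rew_comp2 (tens_idr_inv _ _ _ _ _ feps_invK)) comp1m.
  by rewrite (rew_comp2 (fmu_invK _ _)) comp1m -fhom_comp lam_invK fhom_id.
Qed.

Lemma rho_inv_fobE (x : ob C) :
  rho_inv (fob F x) = (idm _ ⊗ feps_inv F) ⊚ (fmu_inv F x unit ⊚ fhom F (rho_inv x)).
Proof.
  apply: (split_mono_cancel _ _ (rhoK (fob F x))).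
  rewrite rho_invK -fhom_rho -!compmA (rew_comp2 (tens_idl_inv _ _ _ _ _ feps_invK)) comp1m.
  by rewrite (rew_comp2 (fmu_invK _ _)) comp1m -fhom_comp rho_invK fhom_id.
Qed.

Definition fev {y z : ob C} (e : hom (tens z y) unit) : hom (tens (fob F z) (fob F y)) unit :=
  feps_inv F ⊚ (fhom F e ⊚ fmu F z y).
Definition fcoev {y z : ob C} (c : hom unit (tens y z)) : hom unit (tens (fob F y) (fob F z)) :=
  fmu_inv F y z ⊚ (fhom F c ⊚ feps F).

Lemma smfun_dual_pair {y z : ob C} {e c} :
  is_dual_pair y z e c -> is_dual_pair (fob F y) (fob F z) (fev e) (fcoev c).
Proof.
  rewrite /fev /fcoev; move=> [Hy Hz]; split.
  - rewrite -fhom_rho lam_inv_fobE -!compmA !tens_idl_comp !tens_idr_comp -!compmA.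
    rewrite (rew_comp2 (tens_idl_inv _ _ _ _ _ feps_invK)) comp1m.
    rewrite (rew_comp2 (tens_idr_inv _ _ _ _ _ feps_invK)) comp1m.
    rewrite (rew_comp2 (fmu_nat_idl _ _ _ _)) -?compmA.
    rewrite (rew_comp2 (fmu_inv_nat_idr _ _ _ _)) -?compmA fhom_alphaER.
    by rewrite -!fhom_comp Hy fhom_id.
  - rewrite -fhom_lam rho_inv_fobE -!compmA !tens_idl_comp !tens_idr_comp -!compmA.
    rewrite (rew_comp2 (tens_idr_inv _ _ _ _ _ feps_invK)) comp1m.
    rewrite (rew_comp2 (tens_idl_inv _ _ _ _ _ feps_invK)) comp1m.
    rewrite (rew_comp2 (fmu_nat_idr _ _ _ _)) -?compmA.
    rewrite (rew_comp2 (fmu_inv_nat_idl _ _ _ _)) -?compmA fhom_alpha_invER.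
    by rewrite -!fhom_comp Hz fhom_id.
Qed.

End Fun.

Section AntiInvolution.
Context (S : SMAI) (HS : is_SMAI S).
#[local] Instance smC_symmetric : Symmetric (smC S) := proj1 HS.
Local Notation C := (smC S).

Lemma d_smfun : is_smfun (dF S). Proof. apply HS. Qed.

Definition d_eps : @hom C (dob S unit) unit := feps (dF S).
Definition d_eps_inv : @hom C unit (dob S unit) := feps_inv (dF S).
Definition chi_inv (x y : ob C) : @hom C (dob S (tens x y)) (tens (dob S x) (dob S y)) :=
  fmu (dF S) x y.

(* Being contravariant, d turns the coevaluation of a dual pair into an
   evaluation of the image pair, and the evaluation into a coevaluation. *)
Definition d_ev {y z : ob C} (c : hom unit (tens y z)) : hom (tens (dob S y) (dob S z)) unit :=
  d_eps ⊚ (dhom S c ⊚ chi S y z).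
Definition d_coev {y z : ob C} (e : hom (tens z y) unit) : hom unit (tens (dob S z) (dob S y)) :=
  chi_inv z y ⊚ (dhom S e ⊚ d_eps_inv).

Lemma d_dual_pair {y z : ob C} {e c} :
  is_dual_pair y z e c -> is_dual_pair (dob S z) (dob S y) (d_ev c) (d_coev e).
Proof.
  move=> H.
  have H' := dual_pair_op _ _ _ _
    (smfun_dual_pair (HD := op_monoidal _ _) (dF S) d_smfun H).
  rewrite /is_dual_pair /fev /fcoev /= -!compmA in H'; exact: H'.
Qed.

Lemma dhom_comp (x y z : ob C) (f : hom x y) (g : hom y z) :
  dhom S (g ⊚ f) = dhom S f ⊚ dhom S g.
Proof. exact: (fhom_comp (dF S) d_smfun). Qed.
Lemma dhom_id (x : ob C) : dhom S (idm x) = idm (dob S x).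
Proof. exact: (fhom_id (dF S) d_smfun). Qed.
Lemma chi_nat (x x' y y' : ob C) (f : hom x x') (g : hom y y') :
  chi S x y ⊚ (dhom S f ⊗ dhom S g) = dhom S (f ⊗ g) ⊚ chi S x' y'.
Proof. symmetry; exact: (fmu_inv_nat (HD := op_monoidal _ _) (dF S) d_smfun). Qed.
Lemma chi_invK (x y : ob C) : chi S x y ⊚ chi_inv x y = idm _.
Proof. exact: (fmu_invK (dF S) d_smfun). Qed.
Lemma chiK (x y : ob C) : chi_inv x y ⊚ chi S x y = idm _.
Proof. exact: (fmuK (dF S) d_smfun). Qed.

Lemma chi_braid (x y : ob C) :
  dhom S (braid x y) ⊚ chi S y x = chi S x y ⊚ braid (dob S y) (dob S x).
Proof.
  symmetry; apply: (square_inv (chi_inv y x) (chi S y x) (chi_inv x y) (chi S x y)).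
  - exact: chiK.
  - exact: chi_invK.
  - exact: (fhom_braid (dF S) d_smfun x y).
Qed.

Lemma d_ev_nat {y z z' : ob C} (c : hom unit (tens y z)) (g : hom z z') :
  d_ev ((idm y ⊗ g) ⊚ c) = d_ev c ⊚ (idm (dob S y) ⊗ dhom S g).
Proof. by rewrite /d_ev dhom_comp -!compmA -dhom_id chi_nat. Qed.

Lemma d_ev_braid {y z : ob C} (c : hom unit (tens y z)) :
  d_ev (braid y z ⊚ c) = d_ev c ⊚ braid (dob S z) (dob S y).
Proof. by rewrite /d_ev dhom_comp -!compmA chi_braid. Qed.

Definition pairings_dual {y z : ob C} (c : hom unit (tens y z)) (e : hom (tens z y) unit)
    (q : hom y (dob S y)) (p : hom z (dob S z)) : Prop :=
  d_ev c ⊚ (q ⊗ p) = e ⊚ braid y z.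

Lemma pairings_dual_braid {y z : ob C} {c e} (q : hom y (dob S y)) (p : hom z (dob S z)) :
  pairings_dual c e q p -> pairings_dual (braid y z ⊚ c) (e ⊚ braid y z) p q.
Proof. by rewrite /pairings_dual d_ev_braid -compmA braid_nat compmA => ->. Qed.

Lemma pairings_dual_unique {y z : ob C} {e c} (q : hom y (dob S y)) (q' : hom (dob S y) y)
    (p p' : hom z (dob S z)) :
  is_dual_pair y z e c -> q ⊚ q' = idm _ ->
  pairings_dual c e q p -> pairings_dual c e q p' -> p = p'.
Proof.
  move=> Hyz Hq Hp Hp'.
  apply: (dual_pair_tens_idl_inj (d_dual_pair Hyz)).
  have E r : d_ev c ⊚ (idm _ ⊗ r) = d_ev c ⊚ (q ⊗ r) ⊚ (q' ⊗ idm z).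
  { by rewrite -compmA -tens_comp Hq compm1. }
  by rewrite !E Hp Hp'.
Qed.

Lemma pairings_dual_comparison {y z z' : ob C} {c e c' e'} (g : hom z z')
    (q : hom y (dob S y)) (p : hom z' (dob S z')) :
  (idm y ⊗ g) ⊚ c = c' -> e' ⊚ (g ⊗ idm y) = e ->
  pairings_dual c' e' q p -> pairings_dual c e q (dhom S g ⊚ (p ⊚ g)).
Proof.
  rewrite /pairings_dual => Hc He Hp.
  have -> : q ⊗ (dhom S g ⊚ (p ⊚ g)) = (idm _ ⊗ dhom S g) ⊚ ((q ⊗ p) ⊚ (idm _ ⊗ g)).
  { by rewrite -!tens_comp comp1m compm1. }
  by rewrite compmA -d_ev_nat Hc compmA Hp -compmA braid_nat compmA He.
Qed.

Section Duals.
Context (D : DualData C) (HD : is_duals D).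

(* [kappa D x] is the comparison map from the chosen dual of dx to its other
   dual d(x^* ), so it is characterised by [ev_dual_comparison]. *)
Lemma pairings_dual_kappa {x : ob C} (h : hom x (dob S x))
    (k : hom (dual D x) (dual D (dob S x))) :
  dualh D h ⊚ k = idm _ -> pairings_dual (coev D x) (ev D x) h (kappa D x ⊚ k).
Proof.
  move=> hk.
  set E := d_ev (coev D x) ⊚ braid (dob S (dual D x)) (dob S x).
  have Ekappa : E ⊚ (kappa D x ⊗ idm (dob S x)) = ev D (dob S x).
  { exact: (ev_dual_comparison _ (dual_pair_braid (d_dual_pair (dual_data_pair D HD x)))). }
  have Ek : E ⊚ ((kappa D x ⊚ k) ⊗ h) = ev D x.
  { rewrite -(comp1m _ _ h) tens_comp compmA Ekappa tensE_lr compmA -(ev_dualh D HD).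
    by rewrite -compmA -tens_idr_comp hk tens11 compm1. }
  rewrite /pairings_dual -Ek /E -!compmA (rew_comp2 (braid_nat _ _ _ _ _ _)).
  by rewrite -compmA braidK compm1.
Qed.

End Duals.

Section Fermionic.
Context (fl : forall x : ob C, hom x x) (Hfl : is_fermion_action fl).

Lemma mem_Ptilde (P : Pairings S) {x : ob C} (h : hom x (dob S x)) :
  P x (h ⊚ fl x) -> Ptilde fl P x h.
Proof.
  case: Hfl => [_ [_ [_ [flK _]]]] Ph; exists (h ⊚ fl x); split => //.
  by rewrite -compmA flK compm1.
Qed.

Lemma pairings_dual_fl {y z : ob C} {c e} (q : hom y (dob S y)) (p : hom z (dob S z)) :
  pairings_dual c e q p -> pairings_dual c e (q ⊚ fl y) (p ⊚ fl z).
Proof.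
  case: Hfl => [fl_nat [fl_tens [fl_unit _]]].
  rewrite /pairings_dual tens_comp -fl_tens compmA => ->.
  by rewrite -compmA fl_nat compmA fl_nat fl_unit comp1m.
Qed.

Section Positivity.
Context (D : DualData C) (HD : is_duals D) (P : Pairings S).
Hypotheses (HP : is_closed_pos P) (Hc : ferm_dagger_compact D fl P).

Lemma ferm_dual_pairing {x : ob C} (h : hom x (dob S x)) : P x h ->
  exists p, pairings_dual (coev D x) (ev D x) h p /\ P (dual D x) (p ⊚ fl (dual D x)).
Proof.
  move=> Ph; have [[h' [hh' h'h]] _] := proj1 HP x h Ph.
  exists (kappa D x ⊚ dualh D h'); split.
  - exact: (pairings_dual_kappa D HD _ _ (dualh_inv D HD _ _ hh')).
  - rewrite -compmA; exact: (Hc x h Ph _ (dualh_inv D HD _ _ h'h) (dualh_inv D HD _ _ hh')).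
Qed.

Lemma pairings_dual_positive {y z : ob C} {e c} (q : hom y (dob S y)) (p : hom z (dob S z)) :
  is_dual_pair y z e c -> P y q -> pairings_dual c e q p -> P z (p ⊚ fl z).
Proof.
  move=> Hyz Pq Hqp.
  have [[q' [_ qq']] _] := proj1 HP y q Pq.
  have [p0 [Hqp0 Pp0]] := ferm_dual_pairing q Pq.
  set g := dual_comparison e (coev D y).
  have g_iso : is_iso g.
  { exists (dual_comparison (ev D y) c).
    by split; apply: dual_comparisonK => //; exact: dual_data_pair D HD y. }
  have Hg : pairings_dual c e q (dhom S g ⊚ (p0 ⊚ g)).
  { apply: (pairings_dual_comparison g q p0 _ _ Hqp0).
    - exact: dual_comparison_coev.
    - exact: (ev_dual_comparison _ (dual_data_pair D HD y)). }
  clearbody g.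
  rewrite (pairings_dual_unique q q' p _ Hyz qq' Hqp Hg) -!compmA (proj1 Hfl _ _ g).
  rewrite (compmA _ _ _ _ g); exact: (proj2 (proj2 (proj2 HP)) _ _ g _ g_iso Pp0).
Qed.

End Positivity.
End Fermionic.
End AntiInvolution.

Section AntiInvolutiveFunctor.
Context (S1 S2 : SMAI) (HS1 : is_SMAI S1) (HS2 : is_SMAI S2)
  (F : SMFun (smC S1) (smC S2))
  (phi : forall x, @hom (smC S2) (fob F (dob S1 x)) (dob S2 (fob F x)))
  (HF : is_SMAI_functor F phi).
#[local] Instance smC1_symmetric : Symmetric (smC S1) := proj1 HS1.
#[local] Instance smC2_symmetric : Symmetric (smC S2) := proj1 HS2.
Local Notation C1 := (smC S1).

Lemma F_smfun : is_smfun F. Proof. apply HF. Qed.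

Lemma phi_nat (x y : ob C1) (f : hom x y) :
  dhom S2 (fhom F f) ⊚ phi y = phi x ⊚ fhom F (dhom S1 f).
Proof. exact: (proj1 (proj1 (proj2 HF)) x y f). Qed.

Lemma phi_mon (x y : ob C1) :
  (chi_inv S2 (fob F x) (fob F y) ⊚ dhom S2 (fmu F x y)) ⊚ phi (tens x y)
  = (phi x ⊗ phi y) ⊚ (fmu_inv F (dob S1 x) (dob S1 y) ⊚ fhom F (chi_inv S1 x y)).
Proof. exact: (proj1 (proj2 (proj1 (proj2 HF))) x y). Qed.

Lemma phi_unit :
  d_eps S2 ⊚ (dhom S2 (feps F) ⊚ phi unit) = feps_inv F ⊚ fhom F (d_eps S1).
Proof. rewrite compmA; exact: (proj1 (proj2 (proj2 (proj1 (proj2 HF))))). Qed.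

Lemma phi_mon_inv (x y : ob C1) :
  dhom S2 (fmu_inv F x y) ⊚ (chi S2 (fob F x) (fob F y) ⊚ (phi x ⊗ phi y))
  = phi (tens x y) ⊚ (fhom F (chi S1 x y) ⊚ fmu F (dob S1 x) (dob S1 y)).
Proof.
  rewrite compmA; apply: (square_inv _ _ _ _ _ _ _ _ (phi_mon x y)).
  - rewrite -!compmA (compmA _ _ _ _ (fmu F _ _) (fhom F (chi S1 x y))).
    by rewrite -(fhom_comp F F_smfun) (chiK S1 HS1) (fhom_id F F_smfun) comp1m (fmuK F F_smfun).
  - rewrite -!compmA (rew_comp2 (chi_invK S2 HS2 _ _)) comp1m -(dhom_comp S2 HS2).
    by rewrite (fmu_invK F F_smfun) (dhom_id S2 HS2).
Qed.

Lemma pairings_dual_fhom {y z : ob C1} {c e} (q : hom y (dob S1 y)) (p : hom z (dob S1 z)) :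
  pairings_dual S1 c e q p ->
  pairings_dual S2 (fcoev F c) (fev F e) (phi y ⊚ fhom F q) (phi z ⊚ fhom F p).
Proof.
  rewrite /pairings_dual /d_ev compmA => Hqp.
  rewrite /fcoev /fev (dhom_comp S2 HS2) (dhom_comp S2 HS2) tens_comp -!compmA.
  rewrite (rew_comp3 (phi_mon_inv y z)) -?compmA (rew_comp2 (phi_nat _ _ c)) -?compmA.
  rewrite (rew_comp3 phi_unit) -?compmA (fmu_nat F F_smfun) !(rew_fhom_comp F F_smfun) Hqp.
  by rewrite (fhom_comp F F_smfun) -!compmA (fhom_braid F F_smfun).
Qed.

Lemma fhom_dual_pair_braid (D : DualData C1) (HD : is_duals D) (x : ob C1) :
  is_dual_pair (fob F (dual D x)) (fob F x)
    (fev F (ev D x ⊚ braid x (dual D x))) (fcoev F (braid x (dual D x) ⊚ coev D x)).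
Proof. exact: (smfun_dual_pair F F_smfun (dual_pair_braid (dual_data_pair D HD x))). Qed.

End AntiInvolutiveFunctor.

Theorem mainTheorem18
  (S1 S2 : SMAI)
  (D1 : DualData (smC S1)) (D2 : DualData (smC S2))
  (fl1 : forall x : ob (smC S1), @hom (smC S1) x x)
  (fl2 : forall x : ob (smC S2), @hom (smC S2) x x)
  (P1 : Pairings S1) (P2 : Pairings S2)
  (F : SMFun (smC S1) (smC S2))
  (phi : forall x, @hom (smC S2) (fob F (dob S1 x)) (dob S2 (fob F x)))
  (HS1 : is_SMAI S1) (HS2 : is_SMAI S2)
  (HD1 : is_duals D1) (HD2 : is_duals D2)
  (Hfl1 : is_fermion_action fl1) (Hfl2 : is_fermion_action fl2)
  (HP1 : is_closed_pos P1) (HP2 : is_closed_pos P2)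
  (Hc1 : ferm_dagger_compact D1 fl1 P1) (Hc2 : ferm_dagger_compact D2 fl2 P2)
  (HF : is_SMAI_functor F phi)
  (HFP : pairings_sub (image_pairings F phi P1) P2) :
  pairings_sub (image_pairings F phi (Ptilde fl1 P1)) (Ptilde fl2 P2).
Proof.
  move=> y k [x [_ [[h [Ph ->]] [e Hk]]]]; subst y; cbv beta iota in Hk; subst k.
  apply: (mem_Ptilde S2 HS2 fl2 Hfl2 P2).
  have [p [Hhp Pp]] := ferm_dual_pairing S1 HS1 fl1 D1 HD1 P1 HP1 Hc1 h Ph.
  have Hpair := pairings_dual_braid S1 HS1 _ _ (pairings_dual_fl S1 HS1 fl1 Hfl1 _ _ Hhp).
  have Hpair2 := pairings_dual_fhom S1 S2 HS1 HS2 F phi HF _ _ Hpair.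
  have Hdual2 := fhom_dual_pair_braid S1 S2 HS1 HS2 F phi HF D1 HD1 x.
  apply: (pairings_dual_positive S2 HS2 fl2 Hfl2 D2 HD2 P2 HP2 Hc2 _ _ Hdual2 _ Hpair2).
  apply: HFP; exists (dual D1 x), (p ⊚ fl1 (dual D1 x)); split; first exact: Pp.
  by exists eq_refl.
Qed.
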